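(* For every integer $n\geq 16$ there exists a graph $G$ on $n+1$ vertices with $r(G) > \frac{1}{3} n\log n$, together with a vertex $v\in V(G)$ such that the graph $H = G\setminus\{v\}$ obtained by deleting $v$ satisfies $r(H) = n$.
   Context: For a graph $F$, the Ramsey number $r(F)$ is the minimum $N$ such that every two-coloring of the edges of the complete graph $K_N$ contains a monochromatic copy of $F$. All logarithms are to base $2$. *)

From Stdlib Require Import Reals.
From mathcomp Require Import all_boot.

Set Implicit Arguments.
Unset Strict Implicit.
Unset Printing Implicit Defensive.

Definition simple_graph (V : finType) (e : rel V) : Prop :=
  symmetric e /\ irreflexive e.

(* A two-colouring of the edges of K_N: each 2-subset {x,y} of 'I_N
   gets a colour in bool. *)
Definition coloring (N : nat) := {set 'I_N} -> bool.

Definition mono_copy (V : finType) (e : rel V) (N : nat) (c : coloring N)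
  (b : bool) : Prop :=
  exists f : V -> 'I_N, injective f /\
    forall u w : V, e u w -> c [set f u; f w] = b.

Definition ramsey_prop (V : finType) (e : rel V) (N : nat) : Prop :=
  forall c : coloring N, exists b : bool, mono_copy e c b.

Definition is_ramsey_number (V : finType) (e : rel V) (r : nat) : Prop :=
  ramsey_prop e r /\ forall m : nat, m < r -> ~ ramsey_prop e m.

Definition del_vertex_rel (V : finType) (e : rel V) (v : V) :
  rel {x : V | x != v} := fun x y => e (val x) (val y).
Arguments del_vertex_rel {V} e v _ _.

Definition log2 (x : R) : R := Rdiv (ln x) (ln 2).

From Stdlib Require Import Reals Lra Classical.
From mathcomp Require Import all_boot zify.

(* Take k = trunc_log 4 n + 1 and let G be the clique on the vertices
   0, ..., k-1 joined to an apex n adjacent to every vertex.  Deleting the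
   apex leaves a k-clique plus isolated vertices, n vertices in all, and
   r(K_k) <= 4^(k-1) <= n by the Erdos-Szekeres bound, so r(H) = n.
   Conversely, split K_(kn) into k blocks of n vertices and colour an edge
   true iff it lies inside a block: a true copy of G, which is connected,
   would fit in one block of n < n + 1 vertices, and a false copy would need
   its (k+1)-clique to meet k + 1 distinct blocks.  Hence
   r(G) > kn > n log n / 2. *)

Section Monochromatic.
Context {T : finType} (c : {set T} -> bool).

Definition monochromatic (b : bool) (S : {set T}) :=
  forall i j, i \in S -> j \in S -> i != j -> c [set i; j] = b.

Lemma monochromatic1 b x : monochromatic b [set x].
Proof. by move=> i j; rewrite !in_set1 => /eqP-> /eqP->; rewrite eqxx. Qed.

Lemma monochromaticU1 b x (S : {set T}) :
  (forall y, y \in S -> c [set x; y] = b) -> monochromatic b S ->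
  monochromatic b (x |: S).
Proof.
move=> cx mS i j; rewrite !in_setU1.
case/orP=> [/eqP->|iS] /orP[/eqP->|jS]; rewrite ?eqxx // => ij.
- exact: cx.
- by rewrite setUC cx.
- exact: mS.
Qed.

Lemma ramsey_bound a b (A : {set T}) : 2 ^ (a + b) <= #|A| ->
  exists S : {set T}, S \subset A /\
    (a < #|S| /\ monochromatic true S \/ b < #|S| /\ monochromatic false S).
Proof.
have singleton (B : {set T}) k : 2 ^ k <= #|B| -> exists2 x, x \in B & [set x] \subset B.
  move=> hB; have [x xB] : exists x, x \in B.
    by apply/card_gt0P; apply: leq_trans hB; rewrite expn_gt0.
  by exists x; rewrite ?sub1set.
elim: a b A => [|a IHa] b A hA.
  have [x _ sxA] := singleton _ _ hA.
  by exists [set x]; split; last by left; rewrite cards1; split; last exact: monochromatic1.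
elim: b A hA => [|b IHb] A hA.
  have [x _ sxA] := singleton _ _ hA.
  by exists [set x]; split; last by right; rewrite cards1; split; last exact: monochromatic1.
have [x xA _] := singleton _ _ hA.
pose P := [set y | c [set x; y]].
pose R := (A :\ x) :&: P; pose B := (A :\ x) :\: P.
have sRA : R \subset A := subset_trans (subsetIl _ _) (subD1set A x).
have sBA : B \subset A := subset_trans (subsetDl _ _) (subD1set A x).
have xR : x \notin R by rewrite !inE eqxx.
have xB : x \notin B by rewrite !inE eqxx andbF.
have cardRB : #|R| + #|B| = #|A|.-1 by rewrite cardsID (cardsD1 x A) xA.
have double : 2 ^ (a.+1 + b.+1) = 2 ^ (a + b.+1) + 2 ^ (a.+1 + b).
  by rewrite addSn addnS expnS mul2n -addnn.
have [hR|hB] : 2 ^ (a + b.+1) <= #|R| \/ 2 ^ (a.+1 + b) <= #|B| by lia.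
- have [S [sSR [[aS mS]|[bS mS]]]] := IHa b.+1 R hR; last first.
    by exists S; split; [exact: subset_trans sRA | right].
  exists (x |: S); split; first by rewrite subUset sub1set xA (subset_trans sSR).
  left; rewrite cardsU1 (contra (subsetP sSR x) xR); split=> //.
  by apply: monochromaticU1 mS => y /(subsetP sSR); rewrite !inE => /andP[].
- have [S [sSB [[aS mS]|[bS mS]]]] := IHb B hB.
    by exists S; split; [exact: subset_trans sBA | left].
  exists (x |: S); split; first by rewrite subUset sub1set xA (subset_trans sSB).
  right; rewrite cardsU1 (contra (subsetP sSB x) xB); split=> //.
  by apply: monochromaticU1 mS => y /(subsetP sSB); rewrite !inE => /andP[/negbTE].
Qed.

End Monochromatic.

Lemma inj_ord_prefix_in {N} (S : {set 'I_N}) :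
  exists2 g : 'I_N -> 'I_N, injective g & forall i : 'I_N, i < #|S| -> g i \in S.
Proof.
case: N S => [|N] S; first by exists id => // [[]].
pose s := enum S ++ enum (~: S).
have size_s : size s = N.+1 by rewrite size_cat -!cardE cardsC card_ord.
have uniq_s : uniq s.
  by rewrite cat_uniq !enum_uniq andbT; apply/hasPn => x; rewrite !mem_enum inE.
exists (fun i => nth ord0 s i).
  by move=> i j /eqP; rewrite nth_uniq ?size_s // => /eqP /val_inj.
by move=> i iS; rewrite nth_cat -cardE iS -mem_enum mem_nth // -cardE.
Qed.

Lemma mono_copy_of_monochromatic {V : finType} {e : rel V} {N} {c : coloring N} {b}
    {S : {set 'I_N}} {h : V -> 'I_N} :
  injective h -> irreflexive e ->
  (forall u w, e u w -> (h u < #|S|) && (h w < #|S|)) ->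
  monochromatic c b S -> mono_copy e c b.
Proof.
move=> hinj irr hS mS; have [g ginj gS] := inj_ord_prefix_in S.
exists (g \o h); split; first exact: inj_comp.
move=> u w euw; have /andP[uS wS] := hS u w euw.
apply: mS; rewrite ?gS //= (inj_eq ginj) (inj_eq hinj).
by apply: contraTneq euw => ->; rewrite irr.
Qed.

Lemma ramsey_prop_expn {V : finType} {e : rel V} :
  irreflexive e -> ramsey_prop e (2 ^ (#|V| + #|V|)).
Proof.
move=> irr c.
have leVN : #|V| <= 2 ^ (#|V| + #|V|).
  exact: leq_trans (ltnW (ltn_expl _ (ltnSn 1))) (leq_pexp2l _ (leq_addr _ _)).
pose h u := widen_ord leVN (enum_rank u).
have hinj : injective h by move=> u w /(congr1 val) /= /ord_inj /enum_rank_inj.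
have hS (S : {set 'I_(2 ^ (#|V| + #|V|))}) : #|V| < #|S| ->
    forall u w, e u w -> (h u < #|S|) && (h w < #|S|).
  by move=> VS u w _; rewrite !(leq_trans (ltn_ord (enum_rank _)) (ltnW VS)).
have [|S [_ [[VS mS]|[VS mS]]]] := @ramsey_bound _ c #|V| #|V| setT _.
- by rewrite cardsT card_ord.
- by exists true; apply: mono_copy_of_monochromatic mS; last exact: hS.
- by exists false; apply: mono_copy_of_monochromatic mS; last exact: hS.
Qed.

Lemma ramsey_number_exists {V : finType} {e : rel V} {N} :
  ramsey_prop e N -> exists r, is_ramsey_number e r.
Proof.
elim/ltn_ind: N => N IH hN.
have [[m [ltmN hm]]|no_smaller] := classic (exists m, m < N /\ ramsey_prop e m).
  exact: IH hm.
by exists N; split=> // m ltmN hm; apply: no_smaller; exists m.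
Qed.

Lemma ramsey_prop_card {V : finType} {e : rel V} {N} : ramsey_prop e N -> #|V| <= N.
Proof.
by move=> /(_ (fun _ => true)) [b [f [/leq_card + _]]]; rewrite card_ord.
Qed.

Lemma is_ramsey_number_card {V : finType} {e : rel V} :
  ramsey_prop e #|V| -> is_ramsey_number e #|V|.
Proof. by split=> // m ltm /ramsey_prop_card; rewrite leqNgt ltm. Qed.

Lemma card_del_vertex (V : finType) (v : V) : #|{: {x : V | x != v}}| = #|V|.-1.
Proof. by rewrite card_sig cardC1. Qed.

Definition block_coloring (n N : nat) : coloring N :=
  fun A => [forall i in A, forall j in A, i %/ n == j %/ n].

Lemma block_coloring2 n N (i j : 'I_N) :
  block_coloring n N [set i; j] = (i %/ n == j %/ n).
Proof.
apply/forall_inP/eqP => [blk | eq_ij].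
  by have /forall_inP /(_ j (set22 i j)) /eqP := blk i (set21 i j).
move=> x; rewrite !inE => /orP[]/eqP->; apply/forall_inP => y;
  by rewrite !inE => /orP[]/eqP->; rewrite ?eq_ij eqxx.
Qed.

Lemma block_coloring_true_card {V : finType} {e : rel V} {n N} (v : V) : 0 < n ->
  (forall x, x != v -> e v x) ->
  mono_copy e (block_coloring n N) true -> #|V| <= n.
Proof.
move=> n0 ev [f [finj fe]].
have same_block x : f x %/ n = f v %/ n.
  have [->//|xv] := eqVneq x v.
  by apply/eqP; rewrite eq_sym -block_coloring2; apply/fe/ev.
pose h x := Ordinal (ltn_pmod (f x) n0).
suff /leq_card : injective h by rewrite card_ord.
move=> x y /(congr1 val) /= eqmod; apply/finj/val_inj.
by rewrite /= (divn_eq (f x) n) (divn_eq (f y) n) eqmod !same_block.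
Qed.

Lemma block_coloring_false_card {V : finType} {e : rel V} {m} (w : 'I_m -> V) {n k N} :
  0 < n -> N <= k * n -> (forall i j, i != j -> e (w i) (w j)) ->
  mono_copy e (block_coloring n N) false -> m <= k.
Proof.
move=> n0 leN clique [f [_ fe]].
have blk i : f (w i) %/ n < k by rewrite ltn_divLR // (leq_trans (ltn_ord _) leN).
suff /leq_card : injective (fun i => Ordinal (blk i)) by rewrite !card_ord.
move=> i j /(congr1 val) /= /eqP; apply: contraTeq => ij.
by rewrite -block_coloring2 fe ?clique.
Qed.

Definition apex_clique n k : rel 'I_n.+1 :=
  fun x y => (x != y) && [|| x == ord_max, y == ord_max | (x < k) && (y < k)].

Lemma apex_clique_simple n k : simple_graph (apex_clique n k).
Proof.
split=> [x y | x]; last by rewrite /apex_clique eqxx.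
by rewrite /apex_clique eq_sym orbCA [(x < k) && _]andbC.
Qed.

Lemma apex_clique_ramsey_gt {n k N} : 0 < n -> k <= n ->
  ramsey_prop (apex_clique n k) N -> k * n < N.
Proof.
move=> n0 kn rN; rewrite ltnNge; apply/negP => leN.
have [[] copy] := rN (block_coloring n N).
  have apex x : x != ord_max -> apex_clique n k ord_max x.
    by move=> xv; rewrite /apex_clique eq_sym xv eqxx.
  by have := block_coloring_true_card ord_max n0 apex copy; rewrite card_ord ltnn.
pose w (j : 'I_k.+1) : 'I_n.+1 := inord (if j < k then j : nat else n).
have val_w j : w j = (if j < k then j : nat else n) :> nat.
  by rewrite inordK //; case: ifP; lia.
have clique i j : i != j -> apex_clique n k (w i) (w j).
  move=> ij; rewrite /apex_clique -!val_eqE /= !val_w.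
  have := ltn_ord i; have := ltn_ord j; have : (i : nat) != j := ij.
  by case: ifP; case: ifP; lia.
by have := block_coloring_false_card w n0 leN clique copy; rewrite ltnn.
Qed.

Lemma del_max_lt {n} (x : {x : 'I_n.+1 | x != ord_max}) : val (val x) < n.
Proof. by rewrite ltn_neqAle -ltnS ltn_ord andbT; exact: valP x. Qed.

Lemma apex_clique_del_ramsey_prop n k : 4 ^ k.-1 <= n ->
  ramsey_prop (del_vertex_rel (apex_clique n k) ord_max) n.
Proof.
move=> lo c.
have irr : irreflexive (del_vertex_rel (apex_clique n k) ord_max).
  by move=> x; rewrite /del_vertex_rel (apex_clique_simple n k).2.
pose h (x : {x : 'I_n.+1 | x != ord_max}) := Ordinal (del_max_lt x).
have hinj : injective h by move=> x y /(congr1 val) /= /ord_inj /val_inj.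
have hS (S : {set 'I_n}) : k.-1 < #|S| ->
    forall u w, del_vertex_rel (apex_clique n k) ord_max u w ->
    (h u < #|S|) && (h w < #|S|).
  move=> kS u w; rewrite /del_vertex_rel /apex_clique -!val_eqE /=.
  rewrite !(ltn_eqF (del_max_lt _)) /= => /andP[_ /andP[uk wk]].
  have kS' : k <= #|S| by lia.
  by rewrite (leq_trans uk kS') (leq_trans wk kS').
have [|S [_ [[kS mS]|[kS mS]]]] := @ramsey_bound _ c k.-1 k.-1 setT _.
- by rewrite cardsT card_ord addnn -mul2n expnM.
- by exists true; apply: mono_copy_of_monochromatic hinj irr (hS S kS) mS.
- by exists false; apply: mono_copy_of_monochromatic hinj irr (hS S kS) mS.
Qed.

Lemma INR_expn m j : INR (m ^ j) = pow (INR m) j.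
Proof. by elim: j => //= j IH; rewrite expnS -multE mult_INR IH. Qed.

Lemma log2_INR_lt n m : 0 < n -> n < 2 ^ m -> Rlt (log2 (INR n)) (INR m).
Proof.
move=> n0 nm.
have ln2 : Rlt 0 (ln 2) by rewrite -ln_1; apply: ln_increasing; lra.
have ln_lt : Rlt (ln (INR n)) (Rmult (INR m) (ln 2)).
  rewrite -ln_pow; last lra.
  apply: ln_increasing; first exact/lt_0_INR/ltP.
  have -> : pow 2 m = INR (2 ^ m) by rewrite INR_expn; congr pow; simpl; lra.
  exact/lt_INR/ltP.
rewrite /log2 /Rdiv; apply: (Rmult_lt_reg_r (ln 2)) => //.
by rewrite Rmult_assoc Rinv_l ?Rmult_1_r //; lra.
Qed.

Lemma nlogn_third_lt {n k} : 0 < n -> n < 4 ^ k ->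
  Rlt (Rmult (Rdiv 1 3) (Rmult (INR n) (log2 (INR n)))) (INR (k * n)).
Proof.
move=> n0 nk.
have log_lt : Rlt (log2 (INR n)) (INR (k + k)).
  by apply: log2_INR_lt; rewrite // addnn -mul2n expnM.
have n0R : Rlt 0 (INR n) by apply/lt_0_INR/ltP.
have := Rmult_lt_compat_l _ _ _ n0R log_lt.
have := Rmult_le_pos _ _ (pos_INR k) (pos_INR n).
rewrite -multE mult_INR plus_INR; lra.
Qed.

Theorem theorem1p2 :
  forall n : nat, 16 <= n ->
    exists e : rel 'I_n.+1,
      simple_graph e /\
      (exists rG : nat, is_ramsey_number e rG /\
         Rgt (INR rG) (Rmult (Rdiv 1 3) (Rmult (INR n) (log2 (INR n))))) /\
      exists v : 'I_n.+1, is_ramsey_number (del_vertex_rel e v) n.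
Proof.
move=> n n16; have n0 : 0 < n by lia.
pose k := (trunc_log 4 n).+1.
have /andP[lo hi] : 4 ^ k.-1 <= n < 4 ^ k := @trunc_log_bounds 4 n isT n0.
have kn : k <= n := leq_trans (@ltn_expl 4 k.-1 isT) lo.
exists (apex_clique n k); split; first exact: apex_clique_simple.
split.
  have simple := apex_clique_simple n k.
  have [r rG] := ramsey_number_exists (ramsey_prop_expn simple.2).
  exists r; split=> //; apply: (Rlt_trans _ _ _ (nlogn_third_lt n0 hi)).
  exact/lt_INR/ltP/(apex_clique_ramsey_gt n0 kn rG.1).
exists ord_max.
have cardH : #|{: {x : 'I_n.+1 | x != ord_max}}| = n.
  by rewrite card_del_vertex card_ord.
rewrite -[X in is_ramsey_number _ X]cardH; apply: is_ramsey_number_card.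
by rewrite cardH; exact: apex_clique_del_ramsey_prop.
Qed.
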